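(* Let $\Gamma$ act essentially by cubical automorphisms on a finite dimensional CAT(0) cube complex $Y$ with no facing triples. Let $\mathfrak h$ be a hyperplane of $Y$ and $\gamma\in\Gamma$ with $\gamma\mathfrak h^+\subsetneq\mathfrak h^+$. Then every hyperplane in the symmetric difference $\mathcal H(\mathfrak h)\,\Delta\,\mathcal H(\gamma\mathfrak h)$ is skewered by $\gamma$. Consequently $|\mathcal H(\mathfrak h)\,\Delta\,\mathcal H(\gamma\mathfrak h)|<\infty$ and the Hausdorff distance (with respect to the piecewise $\ell^1$ metric) between $\mathfrak h$ and $\gamma\mathfrak h$ is finite.
   Context: For a subspace $A\subseteq Y$, $\mathcal H(A)$ is the set of hyperplanes of $Y$ which separate points of $A$. $\mathfrak h^\pm$ denote the two halfspaces bounded by $\mathfrak h$. An element $g$ skewers a hyperplane $\mathfrak k$ if there is $n\ge1$ with $g^n\mathfrak k^+\subsetneq\mathfrak k^+$ or $g^n\mathfrak k^-\subsetneq\mathfrak k^-$. A facing triple is a triple of pairwise disjoint hyperplanes none of which separates the other two. The action is essential if no orbit lies in a bounded neighbourhood of a halfspace. *)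

(* Combinatorial model of a CAT(0) cube complex via its
   1-skeleton, a median graph (Chepoi / Roller / Gerasimov duality). *)
From Stdlib Require Import Arith List.
Import ListNotations.

Set Implicit Arguments.

Section Graph.
Variable V : Type.
Variable adj : V -> V -> Prop.

Fixpoint walk (n : nat) (x y : V) : Prop :=
  match n with
  | O => x = y
  | S m => exists z, adj x z /\ walk m z y
  end.

Definition dist (x y : V) (n : nat) : Prop :=
  walk n x y /\ forall m, walk m x y -> n <= m.

Definition dist_le (x y : V) (R : nat) : Prop :=
  exists m, m <= R /\ walk m x y.

Definition in_interval (x y m : V) : Prop :=
  exists a b, dist x m a /\ dist m y b /\ dist x y (a + b).

Definition median_graph : Prop :=
  (forall x y, adj x y -> adj y x) /\
  (forall x, ~ adj x x) /\
  (forall x y, exists n, walk n x y) /\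
  (forall x y z, exists m,
      (in_interval x y m /\ in_interval y z m /\ in_interval x z m) /\
      forall m', in_interval x y m' /\ in_interval y z m' /\ in_interval x z m' ->
                 m' = m).

(* the halfspace of the oriented edge (u,v) containing u *)
Definition W (u v : V) (x : V) : Prop :=
  exists n, dist x u n /\ dist x v (S n).

Definition same_set (A B : V -> Prop) : Prop := forall x, A x <-> B x.
Definition subset (A B : V -> Prop) : Prop := forall x, A x -> B x.
Definition strict_subset (A B : V -> Prop) : Prop :=
  subset A B /\ exists x, B x /\ ~ A x.
Definition compl (A : V -> Prop) : V -> Prop := fun x => ~ A x.

(* A hyperplane is represented by one of its halfspaces h^+ (then h^- is the
   complement). *)
Definition halfspace (A : V -> Prop) : Prop :=
  exists u v, adj u v /\ same_set A (W u v).

Definition same_hyp (A B : V -> Prop) : Prop :=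
  same_set A B \/ same_set A (compl B).

Definition cross (A B : V -> Prop) : Prop :=
  (exists x, A x /\ B x) /\ (exists x, A x /\ ~ B x) /\
  (exists x, ~ A x /\ B x) /\ (exists x, ~ A x /\ ~ B x).

Definition carrier (A : V -> Prop) (x : V) : Prop :=
  exists y, adj x y /\ ((A x /\ ~ A y) \/ (~ A x /\ A y)).

Definition lies_in (A K : V -> Prop) : Prop := subset (carrier A) K.

Definition separates (K A B : V -> Prop) : Prop :=
  (lies_in A K /\ lies_in B (compl K)) \/ (lies_in A (compl K) /\ lies_in B K).

Definition disjoint_hyp (A B : V -> Prop) : Prop := ~ cross A B /\ ~ same_hyp A B.

Definition facing_triple (A B C : V -> Prop) : Prop :=
  halfspace A /\ halfspace B /\ halfspace C /\
  disjoint_hyp A B /\ disjoint_hyp B C /\ disjoint_hyp A C /\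
  ~ separates A B C /\ ~ separates B A C /\ ~ separates C A B.

Definition no_facing_triples : Prop := forall A B C, ~ facing_triple A B C.

Definition finite_dimensional : Prop :=
  exists D, forall l : list (V -> Prop),
    (forall A, In A l -> halfspace A) ->
    (forall i j d, i < j < length l -> cross (nth i l d) (nth j l d)) ->
    length l <= D.

Definition img (f : V -> V) (A : V -> Prop) : V -> Prop :=
  fun x => exists y, A y /\ x = f y.

(* the set H(h) of hyperplanes separating points of h (= crossing h) *)
Definition H_of (h k : V -> Prop) : Prop := cross h k.

Definition in_symdiff (h h' k : V -> Prop) : Prop :=
  halfspace k /\ ((H_of h k /\ ~ H_of h' k) \/ (~ H_of h k /\ H_of h' k)).

Definition skewers (f : V -> V) (k : V -> Prop) : Prop :=
  exists n, 1 <= n /\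
    (strict_subset (img (Nat.iter n f) k) k \/
     strict_subset (img (Nat.iter n f) (compl k)) (compl k)).

(* a set of hyperplanes (given as a predicate on representing halfspaces,
   invariant under same_hyp) is finite *)
Definition finitely_many_hyp (P : (V -> Prop) -> Prop) : Prop :=
  exists l : list (V -> Prop), forall k, P k -> exists A, In A l /\ same_hyp A k.

(* finite Hausdorff distance between the (vertex sets of the) carriers *)
Definition finite_hausdorff_carriers (A B : V -> Prop) : Prop :=
  exists R,
    (forall x, carrier A x -> exists y, carrier B y /\ dist_le x y R) /\
    (forall y, carrier B y -> exists x, carrier A x /\ dist_le y x R).

End Graph.

Record group_on (G : Type) := {
  gmul : G -> G -> G; gone : G; ginv : G -> G;
  gmulA : forall a b c, gmul a (gmul b c) = gmul (gmul a b) c;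
  gmul1 : forall a, gmul gone a = a;
  gmulV : forall a, gmul (ginv a) a = gone }.

(* an action of the group by cubical automorphisms (graph automorphisms of
   the 1-skeleton, which extend uniquely to cubical automorphisms) *)
Definition cubical_action (G V : Type) (grp : group_on G) (adj : V -> V -> Prop)
  (act : G -> V -> V) : Prop :=
  (forall x, act (gone grp) x = x) /\
  (forall g h x, act (gmul grp g h) x = act g (act h x)) /\
  (forall g x y, adj x y <-> adj (act g x) (act g y)).

Definition essential (G V : Type) (adj : V -> V -> Prop) (act : G -> V -> V) : Prop :=
  forall (A : V -> Prop) (x : V), halfspace adj A ->
    ~ (exists R, forall g, exists y, A y /\ dist_le adj (act g x) y R).

From Stdlib Require Import Arith List.
From Stdlib Require Import Classical ClassicalEpsilon Lia.

(* Halfspaces of a median graph are convex, so the distance from a vertex to a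
   halfspace is at most the number of hyperplanes separating them.
   If [k] crosses [h] but not [γh], then up to complement [γh ⊆ k]; for every
   [n >= 1] the complements of [k] and [γ^n k] meet, as otherwise together with
   [γ^(n+1) h] they would form a facing triple, so by finite dimension some
   [γ^n k] with [n <= dim] does not cross [k] and is nested in it.  Hyperplanes
   crossing [γh] but not [h] are handled in the same way, with [compl h] as third
   member of the facing triple.
   Were there infinitely many hyperplanes of the first kind, one could pick
   [k_0, ..., k_dim] with no [γ^(j-i) k_j] inside [k_i], and then the [γ^i k_i]
   would pairwise cross; the second kind is the [γ]-image of the first kind for
   [γ^-1] and [compl h]. *)

Lemma nat_least (P : nat -> Prop) (n : nat) :
  P n -> exists m, P m /\ forall k, P k -> m <= k.
Proof.
  induction n as [n IH] using (well_founded_induction lt_wf); intros Pn.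
  destruct (classic (exists k, k < n /\ P k)) as [[k [Hk Pk]]|Hn].
  - exact (IH k Hk Pk).
  - exists n; split; auto; intros k Pk.
    destruct (le_lt_dec n k); auto. exfalso; apply Hn; eauto.
Qed.

Section MedianGraph.
Variable V : Type.
Variable adj : V -> V -> Prop.
Hypothesis Hsym : forall x y, adj x y -> adj y x.
Hypothesis Hirr : forall x, ~ adj x x.
Hypothesis Hconn : forall x y, exists n, walk adj n x y.
Hypothesis Hmed : forall x y z, exists m,
  (in_interval adj x y m /\ in_interval adj y z m /\ in_interval adj x z m) /\
  forall m', in_interval adj x y m' /\ in_interval adj y z m' /\ in_interval adj x z m' ->
             m' = m.

Lemma walk_app n m x y z :
  walk adj n x y -> walk adj m y z -> walk adj (n + m) x z.
Proof.
  revert x; induction n as [|n IH]; simpl; intros x H1 H2.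
  - subst; auto.
  - destruct H1 as [w [Hw H1]]. exists w; split; eauto.
Qed.

Lemma walk_one x y : adj x y -> walk adj 1 x y.
Proof. intros; simpl; exists y; auto. Qed.

Lemma walk_sym n x y : walk adj n x y -> walk adj n y x.
Proof.
  revert x y; induction n as [|n IH]; intros x y H.
  - simpl in *; auto.
  - destruct H as [w [Hw H]].
    replace (S n) with (n + 1) by lia.
    apply walk_app with w; auto. apply walk_one; auto.
Qed.

Lemma dist_exists x y : exists n, dist adj x y n.
Proof.
  destruct (Hconn x y) as [n Hn].
  destruct (nat_least (fun n => walk adj n x y) n Hn) as [m [Hm Hl]].
  exists m; split; auto.
Qed.

Definition gdist (x y : V) : nat :=
  proj1_sig (constructive_indefinite_description _ (dist_exists x y)).

Lemma gdist_spec x y : dist adj x y (gdist x y).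
Proof. unfold gdist; destruct constructive_indefinite_description; auto. Qed.

Lemma gdist_walk x y : walk adj (gdist x y) x y.
Proof. apply gdist_spec. Qed.

Lemma gdist_min n x y : walk adj n x y -> gdist x y <= n.
Proof. apply gdist_spec. Qed.

Lemma dist_gdist x y n : dist adj x y n -> gdist x y = n.
Proof.
  intros [H1 H2]. pose proof (gdist_spec x y) as [H3 H4].
  specialize (H2 _ H3). specialize (H4 _ H1). lia.
Qed.

Lemma gdist_refl x : gdist x x = 0.
Proof. pose proof (gdist_min 0 x x eq_refl). lia. Qed.

Lemma gdist_eq0 x y : gdist x y = 0 -> x = y.
Proof. intros H. pose proof (gdist_walk x y) as Hw. rewrite H in Hw. exact Hw. Qed.

Lemma gdist_sym x y : gdist x y = gdist y x.
Proof.
  pose proof (gdist_min _ _ _ (walk_sym _ _ _ (gdist_walk x y))).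
  pose proof (gdist_min _ _ _ (walk_sym _ _ _ (gdist_walk y x))). lia.
Qed.

Lemma gdist_triangle x y z : gdist x z <= gdist x y + gdist y z.
Proof. apply gdist_min. apply walk_app with y; apply gdist_walk. Qed.

Lemma gdist_adj x y : adj x y -> gdist x y = 1.
Proof.
  intros H. pose proof (gdist_min _ _ _ (walk_one _ _ H)).
  destruct (gdist x y) eqn:E; [|lia].
  apply gdist_eq0 in E; subst. exfalso; eapply Hirr; eauto.
Qed.

Lemma gdist1_adj x y : gdist x y = 1 -> adj x y.
Proof.
  intros H. pose proof (gdist_walk x y) as Hw. rewrite H in Hw.
  destruct Hw as [z [Hz Hw]]. simpl in Hw. subst; auto.
Qed.

Lemma gdist_step x y n : gdist x y = S n -> exists z, adj x z /\ gdist z y = n.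
Proof.
  intros H. pose proof (gdist_walk x y) as Hw. rewrite H in Hw.
  destruct Hw as [z [Hz Hw]]. exists z; split; auto.
  pose proof (gdist_min _ _ _ Hw). pose proof (gdist_triangle x z y).
  rewrite (gdist_adj _ _ Hz) in *. lia.
Qed.

Lemma gdist_adj_le_r x a b : adj a b -> gdist x a <= S (gdist x b).
Proof. intros. pose proof (gdist_triangle x b a). rewrite (gdist_adj b a) in *; auto. lia. Qed.

Lemma gdist_adj_le_l a b y : adj a b -> gdist a y <= S (gdist b y).
Proof. intros. rewrite (gdist_sym a y), (gdist_sym b y). apply gdist_adj_le_r; auto. Qed.

Lemma nearest_point_exists (K : V -> Prop) x : (exists z, K z) ->
  exists z, K z /\ forall w, K w -> gdist x z <= gdist x w.
Proof.
  intros [z0 Kz0].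
  destruct (nat_least (fun n => exists z, K z /\ gdist x z = n) (gdist x z0)
              (ex_intro _ z0 (conj Kz0 eq_refl))) as [n [[z [Kz Hz]] Hmin]].
  exists z; split; auto. intros w Kw. rewrite Hz. apply Hmin. exists w; auto.
Qed.

Lemma in_interval_gdist x y m :
  in_interval adj x y m <-> gdist x m + gdist m y = gdist x y.
Proof.
  split.
  - intros [a [b [H1 [H2 H3]]]]. apply dist_gdist in H1, H2, H3. lia.
  - intros H. exists (gdist x m), (gdist m y).
    split; [apply gdist_spec|split; [apply gdist_spec|]].
    rewrite H; apply gdist_spec.
Qed.

Lemma gdist_median x y z : exists m,
  (gdist x m + gdist m y = gdist x y /\ gdist y m + gdist m z = gdist y z /\
   gdist x m + gdist m z = gdist x z) /\
  forall m', gdist x m' + gdist m' y = gdist x y -> gdist y m' + gdist m' z = gdist y z ->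
             gdist x m' + gdist m' z = gdist x z -> m' = m.
Proof.
  destruct (Hmed x y z) as [m [[H1 [H2 H3]] H4]].
  exists m. rewrite !in_interval_gdist in H1, H2, H3. split; [auto|].
  intros m' A B C. apply H4. rewrite !in_interval_gdist; auto.
Qed.

Lemma gdist_adj_neq x a b : adj a b -> gdist x a <> gdist x b.
Proof.
  intros Hab E.
  destruct (gdist_median x a b) as [m [[H1 [H2 H3]] _]].
  rewrite (gdist_adj _ _ Hab) in H2.
  destruct (gdist a m) eqn:Ea.
  - apply gdist_eq0 in Ea; subst m. pose proof (gdist_adj _ _ Hab). lia.
  - assert (Hm : gdist m b = 0) by lia. apply gdist_eq0 in Hm; subst m.
    pose proof (gdist_adj _ _ (Hsym _ _ Hab)). lia.
Qed.

Lemma W_gdist u v x : W adj u v x <-> gdist x v = S (gdist x u).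
Proof.
  split.
  - intros [n [H1 H2]]. apply dist_gdist in H1, H2. lia.
  - intros H. exists (gdist x u); split; [apply gdist_spec|]. rewrite <- H; apply gdist_spec.
Qed.

Lemma W_or u v x : adj u v -> W adj u v x \/ W adj v u x.
Proof.
  intros H. rewrite !W_gdist. pose proof (gdist_adj_neq x u v H).
  pose proof (gdist_adj_le_r x u v H). pose proof (gdist_adj_le_r x v u (Hsym _ _ H)). lia.
Qed.

Lemma W_excl u v x : W adj u v x -> W adj v u x -> False.
Proof. rewrite !W_gdist. lia. Qed.

Lemma W_source u v : adj u v -> W adj u v u.
Proof. intros. rewrite W_gdist, gdist_refl, gdist_adj; auto. Qed.

Lemma W_target u v : adj u v -> ~ W adj u v v.
Proof. intros H Hw. rewrite W_gdist, gdist_refl in Hw. discriminate. Qed.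

Lemma gdist_common_nbr a x y : adj a x -> adj a y -> x <> y -> gdist x y = 2.
Proof.
  intros Hx Hy Hne.
  pose proof (gdist_triangle x a y). rewrite (gdist_adj _ _ Hy), (gdist_adj _ _ (Hsym _ _ Hx)) in H.
  destruct (gdist x y) as [|[|[|k]]] eqn:E; try lia.
  - apply gdist_eq0 in E; contradiction.
  - apply gdist1_adj in E. exfalso. apply (gdist_adj_neq a x y E). rewrite !gdist_adj; auto.
Qed.

(* Both [a] and [b] would be the median of [x], [y], [z]. *)
Lemma no_K23 a b x y z : a <> b -> adj a x -> adj a y -> adj a z ->
  adj b x -> adj b y -> adj b z -> x <> y -> y <> z -> x <> z -> False.
Proof.
  intros Hab ax ay az bx b_y bz xy yz xz.
  destruct (gdist_median x y z) as [m [_ Hu]].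
  assert (Hxy := gdist_common_nbr a x y ax ay xy).
  assert (Hyz := gdist_common_nbr a y z ay az yz).
  assert (Hxz := gdist_common_nbr a x z ax az xz).
  assert (a = m).
  { apply Hu; rewrite ?Hxy, ?Hyz, ?Hxz, ?(gdist_adj a x), ?(gdist_adj a y), ?(gdist_adj a z),
      ?(gdist_adj x a), ?(gdist_adj y a), ?(gdist_adj z a); auto. }
  assert (b = m).
  { apply Hu; rewrite ?Hxy, ?Hyz, ?Hxz, ?(gdist_adj b x), ?(gdist_adj b y), ?(gdist_adj b z),
      ?(gdist_adj x b), ?(gdist_adj y b), ?(gdist_adj z b); auto. }
  congruence.
Qed.

Lemma quadrangle x a b t k : adj a t -> adj b t -> a <> b ->
  gdist x a = k -> gdist x b = k -> gdist x t = S k ->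
  exists z, adj a z /\ adj b z /\ S (gdist x z) = k.
Proof.
  intros at_ bt ab Ha Hb Ht.
  destruct (gdist_median x a b) as [m [[H1 [H2 H3]] _]].
  rewrite (gdist_common_nbr t a b (Hsym _ _ at_) (Hsym _ _ bt) ab) in H2.
  rewrite (gdist_sym m a) in H1.
  exists m; split; [apply gdist1_adj; lia|split; [apply gdist1_adj; rewrite gdist_sym; lia|lia]].
Qed.

Lemma common_lower_nbr t a b y1 y2 : adj t a -> adj t b -> a <> b ->
  S (gdist a y1) = gdist t y1 -> S (gdist b y1) = gdist t y1 ->
  S (gdist a y2) = gdist t y2 -> S (gdist b y2) = gdist t y2 ->
  exists z, adj a z /\ adj b z /\
    S (gdist z y1) = gdist a y1 /\ S (gdist z y2) = gdist a y2.
Proof.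
  intros ta tb ab A1 B1 A2 B2.
  rewrite !(gdist_sym _ y1), !(gdist_sym _ y2) in *.
  destruct (quadrangle y1 a b t (gdist y1 a) (Hsym _ _ ta) (Hsym _ _ tb) ab)
    as [z [az [bz Hz]]]; try lia.
  destruct (quadrangle y2 a b t (gdist y2 a) (Hsym _ _ ta) (Hsym _ _ tb) ab)
    as [z' [az' [bz' Hz']]]; try lia.
  assert (z = z').
  { apply NNPP; intro Hzz.
    apply (no_K23 a b t z z' ab (Hsym _ _ ta) az az' (Hsym _ _ tb) bz bz'); auto;
      intros ->; lia. }
  subst z'. exists z. rewrite (gdist_sym z y1), (gdist_sym z y2). auto.
Qed.

(* Induction on [gdist x u]: a step [x''] from [x] towards both [u] and [y]
   and the common lower neighbour [z] of [x'] and [x''] towards [v] and [y]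
   give a counterexample [(x'', z)] closer to [u]. *)
Lemma W_no_geodesic_exit u v : adj u v -> forall p x x' y,
  gdist x u = p -> W adj u v x -> W adj v u x' -> adj x x' ->
  W adj u v y -> S (gdist x' y) = gdist x y -> False.
Proof.
  intros Huv p; induction p as [|p IH]; intros x x' y Hp Wx Wx' Hxx' Wy Hy;
    rewrite W_gdist in *.
  - apply gdist_eq0 in Hp; subst x.
    assert (gdist x' u = 1) by (apply gdist_adj; auto).
    assert (Hv : gdist x' v = 0) by lia. apply gdist_eq0 in Hv; subst x'.
    rewrite (gdist_sym y u), (gdist_sym y v) in Wy. lia.
  - pose proof (gdist_adj_le_l x' x v (Hsym _ _ Hxx')).
    pose proof (gdist_adj_le_l x x' v Hxx').
    pose proof (gdist_adj_le_l x' x u (Hsym _ _ Hxx')).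
    destruct (gdist_median x y u) as [m [[M1 [M2 M3]] _]].
    destruct (gdist x m) as [|n] eqn:Em.
    + apply gdist_eq0 in Em; subst m.
      pose proof (gdist_triangle y x' v). rewrite (gdist_sym y x'), (gdist_sym y x) in *. lia.
    + destruct (gdist_step x m n Em) as [x'' [Hx'' Hm]].
      pose proof (gdist_triangle x'' m u). pose proof (gdist_adj_le_l x x'' u Hx'').
      pose proof (gdist_triangle x'' m y). pose proof (gdist_adj_le_l x x'' y Hx'').
      pose proof (gdist_adj_le_l x x'' v Hx''). pose proof (gdist_adj_le_l x'' x v (Hsym _ _ Hx'')).
      assert (Ex''u : gdist x'' u = p) by lia.
      assert (Ex''y : S (gdist x'' y) = gdist x y) by lia.
      assert (Ex''v : gdist x'' v = S p).
      { destruct (W_or u v x'' Huv) as [Hw|Hw]; rewrite W_gdist in Hw; lia. }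
      assert (Hne : x' <> x'') by (intro; subst; lia).
      destruct (common_lower_nbr x x' x'' v y Hxx' Hx'' Hne) as [z [x'z [x''z [Hzv Hzy]]]];
        try lia.
      pose proof (gdist_adj_le_l x' z u x'z). pose proof (gdist_adj_le_l z x'' u (Hsym _ _ x''z)).
      apply (IH x'' z y); rewrite ?W_gdist; auto; lia.
Qed.

Lemma W_convex u v x y m : adj u v -> W adj u v x -> W adj u v y ->
  gdist x m + gdist m y = gdist x y -> W adj u v m.
Proof.
  intros Huv. remember (gdist x m) as n eqn:Hn. revert x Hn.
  induction n as [|n IH]; intros x Hn Wx Wy Hm.
  - symmetry in Hn. apply gdist_eq0 in Hn; subst; auto.
  - symmetry in Hn. destruct (gdist_step x m n Hn) as [x'' [H1 H2]].
    pose proof (gdist_triangle x'' m y). pose proof (gdist_adj_le_l x x'' y H1).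
    destruct (W_or u v x'' Huv) as [Hw|Hw].
    + apply (IH x''); auto. lia.
    + exfalso. apply (W_no_geodesic_exit u v Huv (gdist x u) x x'' y); auto. lia.
Qed.

Lemma W_dual_edge u v a b : adj u v -> adj a b -> W adj u v a -> W adj v u b ->
  forall x, W adj u v x <-> W adj a b x.
Proof.
  intros Huv Hab Wa Wb x; split; intro Hx.
  - destruct (W_or a b x Hab) as [H|H]; auto. exfalso.
    rewrite W_gdist in H.
    apply (W_excl u v b); auto. apply (W_convex u v x a b); auto.
    rewrite (gdist_adj b a); auto. lia.
  - destruct (W_or u v x Huv) as [H|H]; auto. exfalso.
    rewrite W_gdist in Hx.
    apply (W_excl u v a); auto. apply (W_convex v u x b a); auto.
    rewrite (gdist_adj a b); auto. lia.
Qed.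

Implicit Types (A B K k : V -> Prop) (F Fi : V -> V).

Lemma same_set_refl A : same_set A A.
Proof. intros x; tauto. Qed.

Lemma same_set_sym A B : same_set A B -> same_set B A.
Proof. intros H x. rewrite (H x). tauto. Qed.

Lemma compl_halfspace A : halfspace adj A -> halfspace adj (compl A).
Proof.
  intros [u [v [Huv HA]]]. exists v, u; split; auto.
  intro x; unfold compl; rewrite (HA x). split; intro H.
  - destruct (W_or u v x Huv); tauto.
  - intro H'; exact (W_excl u v x H' H).
Qed.

Lemma halfspace_inhabited A : halfspace adj A -> exists x, A x.
Proof. intros [u [v [Huv HA]]]. exists u. apply HA, W_source; auto. Qed.

Lemma halfspace_compl_inhabited A : halfspace adj A -> exists x, ~ A x.
Proof. intros [u [v [Huv HA]]]. exists v. rewrite (HA v). apply W_target; auto. Qed.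

Lemma halfspace_carrier A : halfspace adj A -> exists x, A x /\ carrier adj A x.
Proof.
  intros [u [v [Huv HA]]]. exists u.
  assert (A u) by (apply HA, W_source; auto).
  assert (~ A v) by (rewrite (HA v); apply W_target; auto).
  split; auto. exists v; split; auto.
Qed.

Lemma halfspace_W A a b : halfspace adj A -> adj a b -> A a -> ~ A b ->
  same_set A (W adj a b).
Proof.
  intros [u [v [Huv HA]]] Hab Ha Hb x. rewrite (HA x).
  apply W_dual_edge; auto. apply HA; auto.
  destruct (W_or u v b Huv); auto. exfalso; apply Hb, HA; auto.
Qed.

Lemma halfspace_convex A x y m : halfspace adj A -> A x -> A y ->
  gdist x m + gdist m y = gdist x y -> A m.
Proof.
  intros [u [v [Huv HA]]] Hx Hy Hm. apply HA.
  apply (W_convex u v x y m); auto; apply HA; auto.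
Qed.

Lemma cross_ext A A' B B' : same_set A A' -> same_set B B' -> cross A B -> cross A' B'.
Proof.
  unfold same_set; intros EA EB [[x1 H1] [[x2 H2] [[x3 H3] [x4 H4]]]].
  split; [exists x1|split; [exists x2|split; [exists x3|exists x4]]];
    rewrite <- ?EA, <- ?EB; auto.
Qed.

Lemma cross_sym A B : cross A B -> cross B A.
Proof.
  intros [[x1 H1] [[x2 H2] [[x3 H3] [x4 H4]]]].
  split; [exists x1|split; [exists x3|split; [exists x2|exists x4]]]; tauto.
Qed.

Lemma cross_compl_r A B : cross A (compl B) <-> cross A B.
Proof.
  unfold cross, compl. split;
  intros [[x1 H1] [[x2 H2] [[x3 H3] [x4 H4]]]];
  (split; [exists x2|split; [exists x1|split; [exists x4|exists x3]]]);
  intuition; apply NNPP; auto.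
Qed.

Lemma cross_compl_l A B : cross (compl A) B <-> cross A B.
Proof.
  split; intro C; apply cross_sym; apply cross_sym in C; apply cross_compl_r; auto.
Qed.

Lemma carrier_compl A x : carrier adj (compl A) x <-> carrier adj A x.
Proof.
  unfold carrier, compl. split; intros [y [Hy K]]; exists y; split; auto; tauto.
Qed.

Lemma same_hyp_trans A B C : same_hyp A B -> same_hyp A C -> same_hyp B C.
Proof.
  unfold same_hyp, same_set, compl. intros [H1|H1] [H2|H2]; [left|right|right|left];
  intro x; specialize (H1 x); specialize (H2 x); split; intros; try tauto;
  apply NNPP; tauto.
Qed.

Lemma same_hyp_compl A B : same_hyp A (compl B) -> same_hyp A B.
Proof.
  unfold same_hyp, same_set, compl. intros [H|H]; [right|left]; intro x; specialize (H x);
  split; intros; try tauto; apply NNPP; tauto.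
Qed.

Lemma same_hyp_ext A B B' : same_hyp A B -> same_set B B' -> same_hyp A B'.
Proof.
  unfold same_hyp, same_set, compl. intros [E|E] E'; [left|right]; intro x;
  rewrite (E x), (E' x); tauto.
Qed.

Lemma strict_subset_ext A A' B B' : same_set A A' -> same_set B B' ->
  strict_subset A B -> strict_subset A' B'.
Proof.
  intros EA EB [S [x [Bx Ax]]]. split.
  - intros y Hy. apply EB, S, EA; auto.
  - exists x. split; [apply EB; auto| rewrite <- (EA x); auto].
Qed.

Definition graph_auto F Fi : Prop :=
  (forall x, F (Fi x) = x) /\ (forall x, Fi (F x) = x) /\
  (forall x y, adj x y <-> adj (F x) (F y)).

Lemma graph_auto_inv F Fi : graph_auto F Fi -> graph_auto Fi F.
Proof.
  intros [H1 [H2 H3]]. split; auto. split; auto. intros x y.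
  rewrite (H3 (Fi x) (Fi y)), !H1. tauto.
Qed.

Lemma graph_auto_iter F Fi n : graph_auto F Fi -> graph_auto (Nat.iter n F) (Nat.iter n Fi).
Proof.
  intros [H1 [H2 H3]]. induction n as [|n [I1 [I2 I3]]].
  - split; [|split]; simpl; auto. tauto.
  - split; [|split].
    + intro x. rewrite Nat.iter_succ_r. simpl. rewrite H1. apply I1.
    + intro x. rewrite Nat.iter_succ_r. simpl. rewrite H2. apply I2.
    + intros x y. simpl. rewrite I3. apply H3.
Qed.

Lemma walk_auto F Fi n x y : graph_auto F Fi -> walk adj n x y -> walk adj n (F x) (F y).
Proof.
  intros [H1 [H2 H3]]. revert x. induction n as [|n IH]; intros x H.
  - simpl in *; subst; auto.
  - destruct H as [z [Hz H]]. exists (F z); split; [apply (proj1 (H3 x z)); auto|auto].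
Qed.

Lemma gdist_auto F Fi x y : graph_auto F Fi -> gdist (F x) (F y) = gdist x y.
Proof.
  intros HF.
  pose proof (gdist_min _ _ _ (walk_auto _ _ _ _ _ HF (gdist_walk x y))).
  pose proof (gdist_min _ _ _
    (walk_auto _ _ _ _ _ (graph_auto_inv _ _ HF) (gdist_walk (F x) (F y)))).
  destruct HF as [_ [H2 _]]. rewrite !H2 in *. lia.
Qed.

Lemma img_auto F Fi A x : graph_auto F Fi -> img F A x <-> A (Fi x).
Proof.
  intros [H1 [H2 H3]]. split.
  - intros [y [Hy ->]]. rewrite H2; auto.
  - intro H. exists (Fi x); split; auto.
Qed.

Lemma img_iter_add F m n A x :
  img (Nat.iter (m + n) F) A x <-> img (Nat.iter m F) (img (Nat.iter n F) A) x.
Proof.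
  unfold img. split.
  - intros [y [Hy ->]]. exists (Nat.iter n F y). split; eauto. apply Nat.iter_add.
  - intros [y [[z [Hz ->]] ->]]. exists z; split; auto. symmetry; apply Nat.iter_add.
Qed.

Lemma halfspace_img F Fi A : graph_auto F Fi -> halfspace adj A -> halfspace adj (img F A).
Proof.
  intros HF [u [v [Huv HA]]]. exists (F u), (F v). split.
  - apply (proj2 (proj2 HF) u v); auto.
  - intro x. rewrite (img_auto F Fi), (HA (Fi x)), !W_gdist by auto.
    rewrite <- (gdist_auto F Fi (Fi x) u), <- (gdist_auto F Fi (Fi x) v) by auto.
    destruct HF as [H1 _]. rewrite H1. tauto.
Qed.

Lemma cross_img F Fi A B : graph_auto F Fi -> cross (img F A) (img F B) <-> cross A B.
Proof.
  intros HF. pose proof HF as [H1 [H2 _]]. unfold cross.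
  setoid_rewrite (img_auto F Fi _ _ HF).
  split; intros [[x1 K1] [[x2 K2] [[x3 K3] [x4 K4]]]].
  - split; [exists (Fi x1)|split; [exists (Fi x2)|split; [exists (Fi x3)|exists (Fi x4)]]]; auto.
  - split; [exists (F x1)|split; [exists (F x2)|split; [exists (F x3)|exists (F x4)]]];
      rewrite H2; auto.
Qed.

Lemma carrier_img F Fi A x : graph_auto F Fi ->
  carrier adj (img F A) x <-> carrier adj A (Fi x).
Proof.
  intros HF. unfold carrier. setoid_rewrite (img_auto F Fi _ _ HF).
  pose proof HF as [H1 [H2 H3]]. split.
  - intros [y [Hy K]]. exists (Fi y). split; auto. apply H3. rewrite !H1; auto.
  - intros [y [Hy K]]. exists (F y). rewrite H2. split; auto.
    rewrite <- (H1 x) at 1. apply (proj1 (H3 _ _)); auto.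
Qed.

Lemma same_hyp_img F Fi A B : graph_auto F Fi -> same_hyp A B -> same_hyp (img F A) (img F B).
Proof.
  unfold same_hyp, same_set, compl. intros HF [E|E]; [left|right]; intro x;
  rewrite !(img_auto F Fi) by auto; rewrite (E (Fi x)); tauto.
Qed.

Lemma skewers_compl F Fi k : graph_auto F Fi -> skewers F (compl k) -> skewers F k.
Proof.
  intros HF [n [Hn [S|S]]]; exists n; split; auto.
  left. revert S. apply strict_subset_ext.
  + intro x. rewrite !(img_auto (Nat.iter n F) (Nat.iter n Fi)) by (apply graph_auto_iter; auto).
    unfold compl. split; [apply NNPP|tauto].
  + intro x. unfold compl. split; [apply NNPP|tauto].
Qed.

Definition hyp_cover (l : list (V -> Prop)) (P : (V -> Prop) -> Prop) : Prop :=
  forall k, P k -> exists A, In A l /\ same_hyp A k.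

Lemma hyp_cover_mono l (P Q : (V -> Prop) -> Prop) :
  hyp_cover l P -> (forall k, Q k -> P k) -> hyp_cover l Q.
Proof. intros H1 H2 k Hk. apply H1, H2; auto. Qed.

Lemma hyp_cover_app l1 l2 (P Q : (V -> Prop) -> Prop) :
  hyp_cover l1 P -> hyp_cover l2 Q -> hyp_cover (l1 ++ l2) (fun k => P k \/ Q k).
Proof.
  intros H1 H2 k [Hk|Hk].
  - destruct (H1 k Hk) as [A [HA E]]. exists A; split; auto. apply in_or_app; auto.
  - destruct (H2 k Hk) as [A [HA E]]. exists A; split; auto. apply in_or_app; auto.
Qed.

Lemma finitely_many_hyp_bounded_union (P : nat -> (V -> Prop) -> Prop) j :
  (forall m, m <= j -> finitely_many_hyp (P m)) ->
  finitely_many_hyp (fun k => exists m, m <= j /\ P m k).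
Proof.
  induction j as [|j IH]; intros H.
  - destruct (H 0 (le_n 0)) as [l Hl]. exists l. intros k [m [Hm Hk]].
    assert (m = 0) by lia. subst. apply Hl; auto.
  - destruct IH as [l1 H1]; [intros m Hm; apply H; lia|].
    destruct (H (S j) (le_n _)) as [l2 H2].
    exists (l1 ++ l2). eapply hyp_cover_mono; [apply (hyp_cover_app _ _ _ _ H1 H2)|].
    intros k [m [Hm Hk]]. destruct (Nat.eq_dec m (S j)).
    + subst; right; auto.
    + left. exists m; split; auto; lia.
Qed.

Lemma separating_hyp_finite p q :
  finitely_many_hyp (fun k => halfspace adj k /\ k p /\ ~ k q).
Proof.
  remember (gdist q p) as n eqn:Hn. revert q Hn.
  induction n as [|n IH]; intros q Hn; symmetry in Hn.
  - apply gdist_eq0 in Hn; subst. exists nil. intros k [_ [H1 H2]]. contradiction.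
  - destruct (gdist_step q p n Hn) as [q' [Hq Hq']].
    destruct (IH q' (eq_sym Hq')) as [l Hl].
    exists (W adj q' q :: l). intros k [Hk [Hp Hnq]].
    destruct (classic (k q')) as [Kq|Kq].
    + exists (W adj q' q); split; [left; auto|]. left. apply same_set_sym.
      apply halfspace_W; auto.
    + destruct (Hl k) as [A [HA E]]; auto. exists A; split; auto. right; auto.
Qed.

Lemma hyp_cover_remove l (P : (V -> Prop) -> Prop) B : hyp_cover l P ->
  (exists A, In A l /\ same_hyp A B) ->
  exists l', length l' < length l /\ hyp_cover l' (fun k => P k /\ ~ same_hyp k B).
Proof.
  revert P; induction l as [|C l IH]; intros P Hc [A [HA E]].
  - destruct HA.
  - destruct (classic (same_hyp C B)) as [HC|HC].
    + exists l. split; [simpl; lia|]. intros k [Pk Nk].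
      destruct (Hc k Pk) as [A' [[<-|HA'] E']].
      * exfalso; apply Nk. eapply same_hyp_trans; eauto.
      * exists A'; split; auto.
    + destruct HA as [<-|HA]; [contradiction|].
      destruct (IH (fun k => P k /\ ~ same_hyp C k)) as [l'' [Hlen Hc'']].
      { intros k [Pk Nk]. destruct (Hc k Pk) as [A' [[<-|HA'] E']]; [contradiction|].
        exists A'; split; auto. }
      { exists A; split; auto. }
      exists (C :: l''). split; [simpl; lia|].
      intros k [Pk Nk]. destruct (classic (same_hyp C k)) as [Ck|Ck].
      * exists C; split; [left|]; auto.
      * destruct (Hc'' k) as [A' [HA' E']]; [tauto|]. exists A'; split; [right|]; auto.
Qed.

(* The first edge of a geodesic from [x] to a nearest point [z] of [K] is dual to
   a hyperplane with [K] on one side and [x] on the other. *)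
Lemma gdist_nearest_le_separating K x z l : halfspace adj K -> K z ->
  (forall w, K w -> gdist x z <= gdist x w) ->
  hyp_cover l (fun k => halfspace adj k /\ subset K k /\ ~ k x) -> gdist x z <= length l.
Proof.
  intros HK Kz. remember (gdist x z) as n eqn:Hn. revert x l Hn.
  induction n as [|n IH]; intros x l Hn Hnear Hc; [lia|]. symmetry in Hn.
  destruct (gdist_step x z n Hn) as [x1 [Hx1 Hd1]].
  set (B := W adj x1 x).
  assert (HB : halfspace adj B) by (exists x1, x; split; [auto|apply same_set_refl]).
  assert (Bx : ~ B x) by (apply W_target; auto).
  assert (Bz : B z) by (unfold B; rewrite W_gdist, (gdist_sym z x1), (gdist_sym z x); lia).
  assert (KB : subset K B).
  { intros w Kw. destruct (W_or x1 x w (Hsym _ _ Hx1)) as [Hw|Hw]; auto. exfalso.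
    destruct (gdist_median x z w) as [m [[H1 [H2 H3]] _]].
    assert (Km : K m) by (apply (halfspace_convex K z w m); auto).
    specialize (Hnear m Km).
    assert (Hm : gdist m z = 0) by lia. apply gdist_eq0 in Hm. subst m.
    apply (W_excl x x1 z); auto.
    apply (W_convex x x1 x w z); auto. apply W_source; auto. }
  destruct (hyp_cover_remove l _ B Hc) as [l' [Hlen Hc']].
  { destruct (Hc B) as [A [HA E]]; [repeat split; auto|]. exists A; auto. }
  enough (n <= length l') by lia.
  apply (IH x1 l'); [lia| |].
  - intros w Kw. specialize (Hnear w Kw). pose proof (gdist_triangle x x1 w).
    rewrite (gdist_adj x x1 Hx1) in *. lia.
  - eapply hyp_cover_mono; eauto. intros k [Hk [Sk Nk]].
    assert (Kx : ~ k x).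
    { intro kx. assert (E := halfspace_W k x x1 Hk Hx1 kx Nk).
      apply (W_excl x x1 z); [apply E|]; auto. }
    repeat split; auto. intros [E|E].
    + apply Nk, E, W_source; auto.
    + apply (E z); auto.
Qed.

Lemma walk_enters_carrier K n x z : walk adj n x z -> ~ K x -> K z ->
  exists y, carrier adj K y /\ dist_le adj x y n.
Proof.
  revert x; induction n as [|n IH]; intros x Hw Kx Kz.
  - simpl in Hw; subst; contradiction.
  - destruct Hw as [w [Hxw Hw]]. destruct (classic (K w)) as [Kw|Kw].
    + exists w. split.
      * exists x. split; auto.
      * exists 1. split; [lia|]. apply walk_one; auto.
    + destruct (IH w Hw Kw Kz) as [y [Cy [m [Hm Hwy]]]].
      exists y; split; auto. exists (S m); split; [lia|]. exists w; auto.
Qed.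

Lemma disjoint_hyp_intro A B : halfspace adj A -> halfspace adj B ->
  (forall x, ~ (A x /\ B x)) -> (exists x, ~ A x /\ ~ B x) -> disjoint_hyp A B.
Proof.
  intros HA HB D1 [x0 [N1 N2]]. split.
  - intros [[x Hx] _]. apply (D1 x); auto.
  - intros [E|E].
    + destruct (halfspace_inhabited A HA) as [x Hx]. apply (D1 x). split; auto. apply E; auto.
    + apply N1. apply E. exact N2.
Qed.

Lemma not_separates_intro A B C : halfspace adj B -> halfspace adj C ->
  (forall x, ~ (A x /\ B x)) -> (forall x, ~ (A x /\ C x)) -> ~ separates adj A B C.
Proof.
  intros HB HC D1 D2 [[L1 L2]|[L1 L2]].
  - destruct (halfspace_carrier B HB) as [x [Bx Cx]]. apply (D1 x); split; [apply L1|]; auto.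
  - destruct (halfspace_carrier C HC) as [x [Bx Cx]]. apply (D2 x); split; [apply L2|]; auto.
Qed.

Lemma facing_triple_intro A B C : halfspace adj A -> halfspace adj B -> halfspace adj C ->
  (forall x, ~ (A x /\ B x)) -> (forall x, ~ (B x /\ C x)) -> (forall x, ~ (A x /\ C x)) ->
  (exists x, ~ A x /\ ~ B x) -> (exists x, ~ B x /\ ~ C x) -> (exists x, ~ A x /\ ~ C x) ->
  facing_triple adj A B C.
Proof.
  intros HA HB HC D1 D2 D3 N1 N2 N3.
  refine (conj HA (conj HB (conj HC (conj _ (conj _ (conj _ (conj _ (conj _ _)))))))).
  - apply disjoint_hyp_intro; auto.
  - apply disjoint_hyp_intro; auto.
  - apply disjoint_hyp_intro; auto.
  - apply not_separates_intro; auto.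
  - apply not_separates_intro; auto; intros x [H1 H2]; apply (D1 x); tauto.
  - apply not_separates_intro; auto; intros x [H1 H2]; [apply (D3 x)|apply (D2 x)]; tauto.
Qed.

Lemma img_iter_compl F Fi n A : graph_auto F Fi ->
  same_set (compl (img (Nat.iter n F) A)) (img (Nat.iter n F) (compl A)).
Proof.
  intros HF x. unfold compl.
  rewrite !(img_auto (Nat.iter n F) (Nat.iter n Fi)) by (apply graph_auto_iter; auto). tauto.
Qed.

Lemma cross_iter_shift F Fi i j A B : graph_auto F Fi -> i <= j ->
  cross A (img (Nat.iter (j - i) F) B) ->
  cross (img (Nat.iter i F) A) (img (Nat.iter j F) B).
Proof.
  intros HF Hij C.
  apply (cross_ext (img (Nat.iter i F) A) _ (img (Nat.iter i F) (img (Nat.iter (j - i) F) B))).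
  - apply same_set_refl.
  - intro x. rewrite <- img_iter_add. replace (i + (j - i)) with j by lia. tauto.
  - apply (cross_img _ _ _ _ (graph_auto_iter F Fi i HF)); auto.
Qed.

Lemma not_cross_nested A B : (exists x, A x /\ B x) -> (exists x, ~ A x /\ ~ B x) ->
  ~ same_set B A -> ~ cross A B ->
  strict_subset B A \/ strict_subset (compl B) (compl A).
Proof.
  intros [x1 Q1] [x4 Q4] NE NC. unfold strict_subset, subset, compl.
  destruct (classic (exists x, A x /\ ~ B x)) as [[x2 Q2]|Q2].
  - destruct (classic (exists x, ~ A x /\ B x)) as [[x3 Q3]|Q3].
    + exfalso; apply NC. split; [eauto|split; eauto].
    + left. split.
      * intros x Bx. apply NNPP; intro; apply Q3; eauto.
      * exists x2; tauto.
  - right. split.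
    + intros x Bx Ax. apply Q2; eauto.
    + apply NNPP; intro N. apply NE. intro x. split; intro Hx; apply NNPP; intro Hy;
        [apply N|apply Q2]; exists x; tauto.
Qed.

Section FiniteDimension.
Variable D : nat.
Hypothesis HD : forall l : list (V -> Prop), (forall A, In A l -> halfspace adj A) ->
  (forall i j dd, i < j < length l -> cross (nth i l dd) (nth j l dd)) -> length l <= D.
Hypothesis Hnft : no_facing_triples adj.

Lemma no_crossing_family (b : nat -> V -> Prop) :
  (forall i, i <= D -> halfspace adj (b i)) ->
  (forall i j, i < j -> j <= D -> cross (b i) (b j)) -> False.
Proof.
  intros Hb Hc. set (l := map b (seq 0 (S D))).
  assert (Hl : length l <= D); [|unfold l in Hl; rewrite length_map, length_seq in Hl; lia].
  apply HD.
  - intros A HA. unfold l in HA. apply in_map_iff in HA. destruct HA as [i [<- Hi]].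
    apply in_seq in Hi. apply Hb. lia.
  - intros i j dd Hij. unfold l in *. rewrite length_map, length_seq in Hij.
    rewrite (nth_indep _ (n:=i) dd (b 0)), (nth_indep _ (n:=j) dd (b 0))
      by (rewrite length_map, length_seq; lia).
    rewrite !map_nth, !seq_nth by lia. apply Hc; lia.
Qed.

(* Some [F^n K] with [1 <= n <= D] does not cross [K], as otherwise
   [K, F K, ..., F^D K] would pairwise cross; such a translate is nested in [K]. *)
Lemma skewers_of_translates_not_disjoint F Fi K : graph_auto F Fi -> halfspace adj K ->
  (forall n, 1 <= n -> exists x, K x /\ img (Nat.iter n F) K x) ->
  (forall n, 1 <= n -> exists x, ~ K x /\ ~ img (Nat.iter n F) K x) ->
  (forall n, 1 <= n -> ~ same_set (img (Nat.iter n F) K) K) ->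
  skewers F K.
Proof.
  intros HF HK Hmeet Hcomeet Hneq.
  destruct (classic (exists n, 1 <= n <= D /\ ~ cross K (img (Nat.iter n F) K)))
    as [[n [Hn Nc]]|N].
  - exists n. split; [lia|].
    destruct (not_cross_nested _ _ (Hmeet n ltac:(lia)) (Hcomeet n ltac:(lia))
                (Hneq n ltac:(lia)) Nc) as [S|S]; [left; auto|right].
    revert S. apply strict_subset_ext; [apply (img_iter_compl F Fi)|]; auto.
    apply same_set_refl.
  - exfalso. apply (no_crossing_family (fun i => img (Nat.iter i F) K)).
    + intros i _. apply (halfspace_img _ _ _ (graph_auto_iter F Fi i HF)); auto.
    + intros i j Hij Hj. apply (cross_iter_shift F Fi); [auto|lia|].
      apply NNPP; intro Nc. apply N. exists (j - i). split; [lia|auto].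
Qed.

Section Translate.
Variables F Fi : V -> V.
Hypothesis HF : graph_auto F Fi.
Variable h : V -> Prop.
Hypothesis Hh : halfspace adj h.
Hypothesis HFh : strict_subset (img F h) h.

Lemma img_iter n A x : img (Nat.iter n F) A x <-> A (Nat.iter n Fi x).
Proof. apply img_auto, graph_auto_iter, HF. Qed.

Lemma iter_inj n x y : Nat.iter n F x = Nat.iter n F y -> x = y.
Proof.
  intros E. destruct (graph_auto_iter F Fi n HF) as [_ [H2 _]].
  rewrite <- (H2 x), <- (H2 y), E; auto.
Qed.

Lemma iter_in_h j y : h y -> h (Nat.iter j F y).
Proof.
  induction j; intros Hy; simpl; auto. apply HFh. exists (Nat.iter j F y); auto.
Qed.

Lemma iter_S_in_img j y : h y -> img F h (Nat.iter (S j) F y).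
Proof. intros. exists (Nat.iter j F y); split; auto. apply iter_in_h; auto. Qed.

Lemma iter_shift_in_img t y : h y -> img F h (Nat.iter t F (F y)).
Proof. intros. rewrite <- Nat.iter_succ_r. apply iter_S_in_img; auto. Qed.

Definition contains_translate (k : V -> Prop) : Prop :=
  halfspace adj k /\ subset (img F h) k /\ cross h k.

(* Otherwise [compl k], [compl (F^t k')] and [F^(t+1) h] would face each other. *)
Lemma contains_translate_comeet k k' t : contains_translate k -> contains_translate k' ->
  exists x, ~ k x /\ ~ img (Nat.iter t F) k' x.
Proof.
  intros [Hk [Sk Ck]] [Hk' [Sk' Ck']].
  destruct (halfspace_inhabited h Hh) as [u Hu].
  pose proof (graph_auto_iter F Fi t HF) as HFt.
  apply NNPP; intro N.
  apply (Hnft (compl k) (compl (img (Nat.iter t F) k')) (img (Nat.iter t F) (img F h))).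
  apply facing_triple_intro.
  - apply compl_halfspace; auto.
  - apply compl_halfspace, (halfspace_img _ _ _ HFt); auto.
  - apply (halfspace_img _ _ _ HFt), (halfspace_img _ _ _ HF); auto.
  - intros x [A1 B1]. apply N; exists x; split; auto.
  - intros x [B1 C1]. apply B1. destruct C1 as [y [Hy ->]]. exists y; split; auto.
  - intros x [A1 C1]. apply A1. destruct C1 as [y [[y0 [Hy0 ->]] ->]].
    apply Sk, iter_shift_in_img; auto.
  - exists (Nat.iter t F (F u)). unfold compl; split; intro Hc; apply Hc.
    + apply Sk, iter_shift_in_img; auto.
    + exists (F u); split; auto. apply Sk'. exists u; auto.
  - destruct Ck' as [_ [_ [[y [Hy1 Hy2]] _]]].
    exists (Nat.iter t F y). unfold compl; split.
    + intro Hc; apply Hc. exists y; auto.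
    + intros [y' [Hy' E]]. apply iter_inj in E. subst y'. apply Hy1, HFh; auto.
  - destruct Ck as [_ [_ [[y [Hy1 Hy2]] _]]].
    exists y. unfold compl; split.
    + intro Hc; apply Hc; auto.
    + intros [y' [Hy' E]]. apply Hy1. rewrite E. apply iter_in_h, HFh; auto.
Qed.

Lemma contains_translate_cross_or_nested k k' t :
  contains_translate k -> contains_translate k' -> 1 <= t ->
  cross k (img (Nat.iter t F) k') \/ subset (img (Nat.iter t F) k') k.
Proof.
  intros Ok Ok' Ht.
  destruct (classic (subset (img (Nat.iter t F) k') k)) as [S|S]; [right; auto|left].
  pose proof Ok as [Hk [Sk Ck]]. pose proof Ok' as [Hk' [Sk' Ck']].
  destruct (halfspace_inhabited h Hh) as [u Hu].
  split; [|split; [|split]].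
  - exists (Nat.iter t F (F u)). split.
    + apply Sk, iter_shift_in_img; auto.
    + exists (F u); split; auto. apply Sk'. exists u; auto.
  - destruct Ck' as [_ [[z [Hz1 Hz2]] _]].
    exists (Nat.iter t F z). split.
    + destruct t; [lia|]. apply Sk, iter_S_in_img; auto.
    + intros [y [Hy E]]. apply iter_inj in E. subst; auto.
  - apply NNPP; intro N. apply S. intros x Hx. apply NNPP; intro Nx. apply N. exists x; auto.
  - apply contains_translate_comeet; auto.
Qed.

Lemma contains_translate_skewered k : contains_translate k -> skewers F k.
Proof.
  intros Ok. pose proof Ok as [Hk [Sk Ck]].
  destruct (halfspace_inhabited h Hh) as [u Hu].
  apply (skewers_of_translates_not_disjoint F Fi); auto.
  - intros n Hn. exists (Nat.iter n F (F u)). split.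
    + apply Sk, iter_shift_in_img; auto.
    + exists (F u); split; auto. apply Sk; exists u; auto.
  - intros n Hn. apply contains_translate_comeet; auto.
  - intros n Hn E. destruct Ck as [_ [[z [Hz1 Hz2]] _]].
    assert (Kz : k (Nat.iter n F z)) by (destruct n; [lia|]; apply Sk, iter_S_in_img; auto).
    apply (proj2 (E _)), img_iter in Kz.
    destruct (graph_auto_iter F Fi n HF) as [_ [H2 _]]. rewrite H2 in Kz. auto.
Qed.

(* Otherwise [k], [F^n k] and [compl h] would face each other. *)
Lemma inside_cross_img_skewered k : halfspace adj k -> cross (img F h) k -> subset k h ->
  skewers F k.
Proof.
  intros Hk Ck Sk. pose proof HFh as [_ [z [Hz1 Hz2]]].
  destruct (halfspace_compl_inhabited h Hh) as [v Hv].
  assert (Hin : forall n x, img (Nat.iter n F) k x -> h x).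
  { intros n x [y [Hy ->]]. apply iter_in_h, Sk; auto. }
  apply (skewers_of_translates_not_disjoint F Fi); auto.
  - intros n Hn. apply NNPP; intro N.
    apply (Hnft k (img (Nat.iter n F) k) (compl h)). apply facing_triple_intro.
    + auto.
    + apply (halfspace_img _ _ _ (graph_auto_iter F Fi n HF)); auto.
    + apply compl_halfspace; auto.
    + intros x [A1 B1]; apply N; eauto.
    + intros x [B1 C1]; apply C1; eapply Hin; eauto.
    + intros x [A1 C1]; apply C1, Sk; auto.
    + exists v; split; [intro; apply Hv, Sk; auto| intro; apply Hv; eapply Hin; eauto].
    + exists z; split.
      * intros [y [Hy E]]. apply Hz2. rewrite E. destruct n; [lia|].
        apply iter_S_in_img, Sk; auto.
      * unfold compl; tauto.
    + destruct Ck as [_ [[x [Hx1 Hx2]] _]]. exists x. split; auto. unfold compl.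
      intro C; apply C, HFh; auto.
  - intros n Hn. exists v.
    split; [intro; apply Hv, Sk; auto| intro; apply Hv; eapply Hin; eauto].
  - intros n Hn E. destruct Ck as [_ [_ [[x [Hx1 Hx2]] _]]].
    apply (proj2 (E x)) in Hx2. destruct Hx2 as [y [Hy ->]]. apply Hx1.
    destruct n; [lia|]. apply iter_S_in_img, Sk; auto.
Qed.

Lemma cross_not_img_orient k : halfspace adj k -> cross h k -> ~ cross (img F h) k ->
  contains_translate k \/ contains_translate (compl k).
Proof.
  intros Hk C NC'.
  destruct (classic (subset (img F h) k)) as [S|S]; [left; split; [auto|split; auto]|].
  destruct (classic (subset (img F h) (compl k))) as [S'|S'].
  { right; split; [apply compl_halfspace; auto|split; auto]; apply cross_compl_r; auto. }
  exfalso; apply NC'.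
  split; [|split;[|split]].
  - apply NNPP; intro N; apply S'; intros x Hx Kx; apply N; eauto.
  - apply NNPP; intro N; apply S; intros x Hx; apply NNPP; intro Kx; apply N; eauto.
  - destruct C as [_ [_ [[x [Hx1 Hx2]] _]]]. exists x; split; auto. intro; apply Hx1, HFh; auto.
  - destruct C as [_ [_ [_ [x [Hx1 Hx2]]]]]. exists x; split; auto. intro; apply Hx1, HFh; auto.
Qed.

Lemma cross_img_not_orient k : halfspace adj k -> ~ cross h k -> cross (img F h) k ->
  subset k h \/ subset (compl k) h.
Proof.
  intros Hk NC' C.
  destruct (classic (subset k h)) as [S|S]; [left; auto|].
  destruct (classic (subset (compl k) h)) as [S'|S']; [right; auto|].
  exfalso; apply NC'. split; [|split; [|split]].
  - destruct C as [[x [Hx1 Hx2]] _]. exists x; split; auto. apply HFh; auto.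
  - destruct C as [_ [[x [Hx1 Hx2]] _]]. exists x; split; auto. apply HFh; auto.
  - apply NNPP; intro N; apply S; intros x Hx; apply NNPP; intro; apply N; eauto.
  - apply NNPP; intro N; apply S'; intros x Hx; apply NNPP; intro; apply N; eauto.
Qed.

Lemma symdiff_skewered k : in_symdiff adj h (img F h) k -> skewers F k.
Proof.
  intros [Hk [[C N]|[N C]]]; unfold H_of in *.
  - destruct (cross_not_img_orient k Hk C N) as [Ok|Ok].
    + apply contains_translate_skewered; auto.
    + apply (skewers_compl F Fi); auto. apply contains_translate_skewered; auto.
  - destruct (cross_img_not_orient k Hk N C) as [S|S].
    + apply inside_cross_img_skewered; auto.
    + apply (skewers_compl F Fi); auto. apply inside_cross_img_skewered; auto.
      * apply compl_halfspace; auto.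
      * apply cross_compl_r; auto.
Qed.

(* The hyperplanes [k'] with [F^t k'] inside [k] separate [F u] (for [u] in [h])
   from [F^-t q] (for [q] outside [k]). *)
Lemma contains_translate_nested_finite k t : contains_translate k ->
  finitely_many_hyp (fun k' => contains_translate k' /\ subset (img (Nat.iter t F) k') k).
Proof.
  intros [Hk [Sk Ck]]. destruct (halfspace_inhabited h Hh) as [u Hu].
  destruct (halfspace_compl_inhabited k Hk) as [q Hq].
  destruct (separating_hyp_finite (F u) (Nat.iter t Fi q)) as [l Hl].
  exists l. eapply hyp_cover_mono; [exact Hl|]. intros k' [[Hk' [Sk' Ck']] S].
  split; auto. split.
  - apply Sk'. exists u; auto.
  - intro Kq. apply Hq, S, img_iter; auto.
Qed.

Lemma contains_translate_chain : ~ finitely_many_hyp contains_translate ->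
  forall j, exists b : nat -> (V -> Prop),
    (forall m, m <= j -> contains_translate (b m)) /\
    (forall m m', m < m' -> m' <= j -> ~ subset (img (Nat.iter (m' - m) F) (b m')) (b m)).
Proof.
  intros Ninf j. induction j as [|j [b [Hb1 Hb2]]].
  - assert (exists k, contains_translate k) as [k Ok].
    { apply NNPP; intro N; apply Ninf; exists nil; intros k Ok; exfalso; apply N; eauto. }
    exists (fun _ => k). split; [intros; auto| intros; lia].
  - destruct (finitely_many_hyp_bounded_union
      (fun m k' => contains_translate k' /\ subset (img (Nat.iter (S j - m) F) k') (b m)) j)
      as [l Hl].
    { intros m Hm. apply contains_translate_nested_finite, Hb1; auto. }
    assert (exists c, contains_translate c /\
              ~ exists m, m <= j /\ subset (img (Nat.iter (S j - m) F) c) (b m))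
      as [c [Oc Nc]].
    { apply NNPP; intro N. apply Ninf. exists l. intros k Ok. apply Hl.
      apply NNPP; intro N'. apply N. exists k. split; auto.
      intros [m [Hm S]]. apply N'. exists m; auto. }
    exists (fun i => if Nat.eqb i (S j) then c else b i). split.
    + intros m Hm. destruct (Nat.eqb_spec m (S j)); auto. apply Hb1; lia.
    + intros m m' Hmm Hm'. destruct (Nat.eqb_spec m (S j)); [lia|].
      destruct (Nat.eqb_spec m' (S j)).
      * subst m'. intro S. apply Nc. exists m; split; [lia|auto].
      * apply Hb2; lia.
Qed.

Lemma contains_translate_finite : finitely_many_hyp contains_translate.
Proof.
  apply NNPP; intro Ninf. destruct (contains_translate_chain Ninf D) as [b [Hb1 Hb2]].
  apply (no_crossing_family (fun m => img (Nat.iter m F) (b m))).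
  - intros i Hi. apply (halfspace_img _ _ _ (graph_auto_iter F Fi i HF)), Hb1; auto.
  - intros i j Hij Hj. apply (cross_iter_shift F Fi); [auto|lia|].
    destruct (contains_translate_cross_or_nested (b i) (b j) (j - i)) as [C|S];
      try (apply Hb1; lia); [lia|auto|].
    exfalso; apply (Hb2 i j); auto.
Qed.

Lemma cross_not_img_finite :
  finitely_many_hyp (fun k => halfspace adj k /\ cross h k /\ ~ cross (img F h) k).
Proof.
  destruct contains_translate_finite as [l Hl]. exists l. intros k [Hk [C N]].
  destruct (cross_not_img_orient k Hk C N) as [Ok|Ok].
  - apply Hl; auto.
  - destruct (Hl _ Ok) as [A [HA E]]. exists A; split; auto. apply same_hyp_compl; auto.
Qed.

Lemma separating_from_img_cover u v x x' LO LB : h u -> ~ h v -> adj x x' ->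
  (h x /\ ~ h x' \/ ~ h x /\ h x') ->
  hyp_cover LO contains_translate ->
  hyp_cover LB (fun k => halfspace adj k /\ k (F u) /\ ~ k v) ->
  hyp_cover (W adj x' x :: LO ++ LB)
    (fun k => halfspace adj k /\ subset (img F h) k /\ ~ k x).
Proof.
  intros Hu Hv Hxx' Hc HLO HLB k [Hk [Sk Nk]].
  destruct (classic (cross h k)) as [Ck|Ck].
  - destruct (HLO k) as [A [HA E]]; [split; auto|].
    exists A; split; auto. right; apply in_or_app; auto.
  - destruct (classic (subset k h)) as [S|S].
    + destruct (HLB k) as [A [HA E]].
      { refine (conj Hk (conj _ _)); [apply Sk; exists u; auto| intro; apply Hv, S; auto]. }
      exists A; split; auto. right; apply in_or_app; auto.
    + destruct (classic (k x')) as [Kx'|Kx'].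
      * exists (W adj x' x); split; [left; auto|].
        left. apply same_set_sym. apply halfspace_W; auto.
      * exfalso. apply Ck. split; [|split; [|split]].
        -- exists (F u); split; [apply HFh|apply Sk]; exists u; auto.
        -- destruct Hc as [[A1 A2]|[A1 A2]]; [exists x|exists x']; auto.
        -- apply NNPP; intro N; apply S; intros y Hy; apply NNPP; intro; apply N; eauto.
        -- destruct Hc as [[A1 A2]|[A1 A2]]; [exists x'|exists x]; auto.
Qed.

(* A hyperplane separating a carrier vertex [x] of [h] from [F h] is dual to the
   edge of [x], or crosses [h], or separates the fixed vertices [F u] and [v]. *)
Lemma carrier_near_img_carrier : exists C, forall x, carrier adj h x ->
  exists y, carrier adj (img F h) y /\ dist_le adj x y C.
Proof.
  destruct contains_translate_finite as [LO HLO].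
  destruct (halfspace_inhabited h Hh) as [u Hu].
  destruct (halfspace_compl_inhabited h Hh) as [v Hv].
  destruct (separating_hyp_finite (F u) v) as [LB HLB].
  exists (S (length LO + length LB)). intros x [x' [Hxx' Hc]].
  destruct (classic (img F h x)) as [Fx|Fx].
  - exists x. split.
    + exists x'. split; auto. left. split; auto. intro Fx'.
      destruct Hc as [[A1 A2]|[A1 A2]]; [apply A2, HFh; auto| apply A1, HFh; auto].
    + exists 0. split; [lia|]. reflexivity.
  - destruct (nearest_point_exists (img F h) x) as [z [Fz Hnear]]; [exists (F u), u; auto|].
    assert (Hb : gdist x z <= length (W adj x' x :: LO ++ LB)).
    { apply (gdist_nearest_le_separating (img F h)); auto.
      - apply (halfspace_img _ _ _ HF); auto.
      - apply (separating_from_img_cover u v); auto. }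
    simpl in Hb; rewrite length_app in Hb.
    destruct (walk_enters_carrier (img F h) _ x z (gdist_walk x z) Fx Fz)
      as [y [Cy [m [Hm Wm]]]].
    exists y; split; auto. exists m; split; auto. lia.
Qed.

End Translate.

Lemma img_auto_cancel F Fi A : graph_auto F Fi -> same_set (img F (img Fi A)) A.
Proof.
  intros HF x. rewrite (img_auto F Fi), (img_auto Fi F) by (auto; apply graph_auto_inv; auto).
  destruct HF as [H1 _]. rewrite H1. tauto.
Qed.

Lemma strict_subset_inv_compl F Fi h : graph_auto F Fi -> strict_subset (img F h) h ->
  strict_subset (img Fi (compl h)) (compl h).
Proof.
  intros HF [S [z [Hz1 Hz2]]]. pose proof (graph_auto_inv F Fi HF) as HFi.
  pose proof HF as [H1 [H2 _]]. split.
  - intros x Hx hx. rewrite (img_auto _ _ _ _ HFi) in Hx. apply Hx, S. exists x; auto.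
  - exists (Fi z). split.
    + intro hz. apply Hz2. exists (Fi z). split; auto.
    + rewrite (img_auto _ _ _ _ HFi). unfold compl. rewrite H1. tauto.
Qed.

Lemma symdiff_finite F Fi h : graph_auto F Fi -> halfspace adj h ->
  strict_subset (img F h) h -> finitely_many_hyp (in_symdiff adj h (img F h)).
Proof.
  intros HF Hh HFh. pose proof (graph_auto_inv F Fi HF) as HFi.
  destruct (cross_not_img_finite F Fi HF h Hh HFh) as [l1 H1].
  destruct (cross_not_img_finite Fi F HFi (compl h) (compl_halfspace h Hh)
              (strict_subset_inv_compl F Fi h HF HFh)) as [l2 H2].
  exists (l1 ++ map (img F) l2). intros k [Hk [[C N]|[N C]]]; unfold H_of in *.
  - destruct (H1 k) as [A [HA E]]; [auto|]. exists A; split; auto. apply in_or_app; auto.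
  - destruct (H2 (img Fi k)) as [A [HA E]].
    + split; [apply (halfspace_img _ _ _ HFi); auto|split].
      * apply cross_compl_l, (cross_img _ _ _ _ HF).
        revert C. apply cross_ext; [apply same_set_refl|].
        apply same_set_sym, img_auto_cancel; auto.
      * rewrite (cross_img _ _ _ _ HFi), cross_compl_l. auto.
    + exists (img F A). split.
      * apply in_or_app; right. apply in_map; auto.
      * apply (same_hyp_ext _ (img F (img Fi k))).
        -- apply (same_hyp_img _ _ _ _ HF); auto.
        -- apply img_auto_cancel; auto.
Qed.

Lemma carriers_finite_hausdorff F Fi h : graph_auto F Fi -> halfspace adj h ->
  strict_subset (img F h) h -> finite_hausdorff_carriers adj h (img F h).
Proof.
  intros HF Hh HFh. pose proof (graph_auto_inv F Fi HF) as HFi.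
  destruct (carrier_near_img_carrier F Fi HF h Hh HFh) as [C1 HC1].
  destruct (carrier_near_img_carrier Fi F HFi (compl h) (compl_halfspace h Hh)
              (strict_subset_inv_compl F Fi h HF HFh)) as [C2 HC2].
  exists (C1 + C2). split.
  - intros x Hx. destruct (HC1 x Hx) as [y [Hy [m [Hm Wm]]]].
    exists y; split; auto. exists m; split; [lia|auto].
  - intros y Hy. rewrite (carrier_img _ _ _ _ HF), <- carrier_compl in Hy.
    destruct (HC2 _ Hy) as [z [Hz [m [Hm Wm]]]].
    exists (F z). split.
    + rewrite (carrier_img _ _ _ _ HFi), carrier_compl in Hz. auto.
    + exists m. split; [lia|]. rewrite <- (proj1 HF y).
      apply (walk_auto _ _ _ _ _ HF); auto.
Qed.

End FiniteDimension.

Lemma gmul_ginv_r G (grp : group_on G) g : gmul grp g (ginv grp g) = gone grp.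
Proof.
  rewrite <- (gmul1 grp (gmul grp g (ginv grp g))).
  rewrite <- (gmulV grp (ginv grp g)) at 1.
  rewrite <- (gmulA grp (ginv grp (ginv grp g)) (ginv grp g) (gmul grp g (ginv grp g))).
  rewrite (gmulA grp (ginv grp g) g (ginv grp g)).
  rewrite (gmulV grp g), (gmul1 grp (ginv grp g)), (gmulV grp (ginv grp g)). reflexivity.
Qed.

Lemma cubical_action_graph_auto G (grp : group_on G) act g :
  cubical_action grp adj act -> graph_auto (act g) (act (ginv grp g)).
Proof.
  intros [A1 [A2 A3]]. split; [|split].
  - intro x. rewrite <- A2, gmul_ginv_r, A1; auto.
  - intro x. rewrite <- A2, gmulV, A1; auto.
  - intros; apply A3.
Qed.

End MedianGraph.

Theorem mainTheorem14 (G V : Type) (grp : group_on G) (adj : V -> V -> Prop)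
  (act : G -> V -> V)
  (HY : median_graph adj)
  (Hdim : finite_dimensional adj)
  (Hnft : no_facing_triples adj)
  (Hact : cubical_action grp adj act)
  (Hess : essential adj act)
  (h : V -> Prop) (Hh : halfspace adj h) (gam : G)
  (Hgam : strict_subset (img (act gam) h) h) :
  (forall k, in_symdiff adj h (img (act gam) h) k -> skewers (act gam) k) /\
  finitely_many_hyp (in_symdiff adj h (img (act gam) h)) /\
  finite_hausdorff_carriers adj h (img (act gam) h).
Proof.
  destruct HY as [Hsym [Hirr [Hconn Hmed]]]. destruct Hdim as [D HD].
  pose proof (cubical_action_graph_auto V adj G grp act gam Hact) as Hauto.
  split; [|split].
  - eapply symdiff_skewered; eauto.
  - eapply symdiff_finite; eauto.
  - eapply carriers_finite_hausdorff; eauto.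
Qed.
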